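(* Let $P:[-1,\infty)\to\mathbb{C}\cong\mathbb{R}^2$ be the log-aesthetic curve with shape parameter $\alpha=2$ and $\Lambda=1$ (a circle involute), $P(\theta)=\int_0^\theta(\psi+1)e^{i\psi}\,d\psi$, and let $\delta=\tfrac{2\pi}{3}$. Let $I_\delta$ be its isoptic curve for the angle $\gamma=\pi-\delta=\pi/3$, parametrized for $\theta\ge -1$ by $$I_\delta(\theta)=P(\theta)+\csc(\delta)\Big(V_x(\theta)\sin(\theta+\delta)-V_y(\theta)\cos(\theta+\delta)\Big)(\cos\theta,\sin\theta)^T,$$ where $(V_x(\theta),V_y(\theta))^T$ is the vector $P(\theta+\delta)-P(\theta)$ (i.e. $I_\delta(\theta)$ is the intersection of the tangent lines of $P$ at $P(\theta)$ and $P(\theta+\delta)$). Then the logarithmic curvature graph of $I_\delta$ is not a straight line (its slope is not constant); hence the isoptic is not a log-aesthetic curve, and in particular the circle involute is not autoisoptic. Moreover, the slope of the logarithmic curvature graph of $I_\delta$ (measured between the points with parameters $\theta$ and $\theta+\pi$) tends to $2$ as $\theta\to\infty$.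
   Context: For a regular plane curve with radius of curvature $\rho$ and arc length $s$, the logarithmic curvature graph (LCG) is the curve traced by the points $\big(\log\rho,\ \log(\rho\,|ds/d\rho|)\big)$ along the curve. A log-aesthetic curve with shape parameter $\alpha$ is a curve whose LCG is a straight line of slope $\alpha$, i.e. $\log(\rho\, ds/d\rho)=\alpha\log\rho+c$ for a constant $c$. A curve is called autoisoptic if it coincides (up to similarity) with its isoptic curve. The isoptic curve for angle $\gamma\in(0,\pi)$ is the locus of points from which the curve is seen under angle $\gamma$ (intersection points of pairs of tangent lines meeting at angle $\gamma$). *)

From Stdlib Require Import Reals.
From Coquelicot Require Import Coquelicot.
Open Scope R_scope.

Definition Px (t : R) : R := RInt (fun psi => (psi + 1) * cos psi) 0 t.
Definition Py (t : R) : R := RInt (fun psi => (psi + 1) * sin psi) 0 t.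

Definition delta : R := 2 * PI / 3.

Definition Vx (t : R) : R := Px (t + delta) - Px t.
Definition Vy (t : R) : R := Py (t + delta) - Py t.

Definition tI (t : R) : R :=
  / sin delta * (Vx t * sin (t + delta) - Vy t * cos (t + delta)).
Definition Ix (t : R) : R := Px t + tI t * cos t.
Definition Iy (t : R) : R := Py t + tI t * sin t.

Definition speed (x y : R -> R) (t : R) : R :=
  sqrt (Derive x t ^ 2 + Derive y t ^ 2).
Definition curv_num (x y : R -> R) (t : R) : R :=
  Derive x t * Derive (Derive y) t - Derive y t * Derive (Derive x) t.
Definition rho (x y : R -> R) (t : R) : R :=
  speed x y t ^ 3 / Rabs (curv_num x y t).
(* LCG point (log rho, log (rho |ds/drho|)), with ds/drho = (ds/dt)/(drho/dt) *)
Definition lcg_X (x y : R -> R) (t : R) : R := ln (rho x y t).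
Definition lcg_Y (x y : R -> R) (t : R) : R :=
  ln (rho x y t * Rabs (speed x y t / Derive (rho x y) t)).

(** The LCG is genuinely defined at parameter t: the curve is twice
    differentiable and regular there, has nonzero curvature, and rho has a
    nonzero derivative (so that ds/drho exists). *)
Definition lcg_regular (x y : R -> R) (t : R) : Prop :=
  ex_derive x t /\ ex_derive y t /\
  ex_derive (Derive x) t /\ ex_derive (Derive y) t /\
  0 < speed x y t /\ curv_num x y t <> 0 /\
  ex_derive (rho x y) t /\ Derive (rho x y) t <> 0.

From Stdlib Require Import Reals Lra Nsatz FunctionalExtensionality Classical.
From Coquelicot Require Import Coquelicot.
Open Scope R_scope.

(* The isoptic point is I(t) = P(t) + tI(t) e^{it}, and the velocity of I in the rotating
   frame (e^{it}, i e^{it}) has coordinates a = t + 1 + √3 and b = tI = √3 (t + 1) + 3 - 2e,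
   where e = 2 - δ/√3.  With q = 2 (t + 1) + δ this gives |I'|² = a² + b² = q² + e² and
   I' × I'' = a (a + b') - b (a' - b) = q² + e² + 2e, so ρ, ds/dρ and the LCG are explicit
   functions of q.  Along the LCG the ordinate is twice the abscissa plus a deviation whose
   derivative is r(q) times that of the abscissa, with r < 0 and r = O(1/q²).  By Cauchy's
   mean value theorem the LCG slope between θ and θ + π is 2 + r(c) for some c > q(θ): it
   tends to 2 but never equals 2, so no straight line fits the LCG. *)

Lemma cauchy_mvt (f g df dg : R -> R) (a b : R) :
  a < b ->
  (forall x, a <= x <= b -> is_derive f x (df x)) ->
  (forall x, a <= x <= b -> is_derive g x (dg x)) ->
  exists c, a < c < b /\ (g b - g a) * df c = (f b - f a) * dg c.
Proof.
  intros Hab Hf Hg.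
  assert (Df : forall c, a <= c <= b -> derivable_pt f c)
    by (intros c Hc; exists (df c); apply is_derive_Reals, Hf, Hc).
  assert (Dg : forall c, a <= c <= b -> derivable_pt g c)
    by (intros c Hc; exists (dg c); apply is_derive_Reals, Hg, Hc).
  destruct (MVT f g a b (fun c Hc => Df c ltac:(lra)) (fun c Hc => Dg c ltac:(lra)) Hab
              (fun c Hc => derivable_continuous_pt _ _ (Df c Hc))
              (fun c Hc => derivable_continuous_pt _ _ (Dg c Hc)))
    as (c & Hc & E).
  exists c; split; [exact Hc|].
  rewrite (derive_pt_eq_0 f c (df c)), (derive_pt_eq_0 g c (dg c)) in E; [exact E| |];
    apply is_derive_Reals; [apply Hg | apply Hf]; lra.
Qed.

Lemma RInt_antiderivative (F f : R -> R) (a b : R) :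
  (forall x, is_derive F x (f x)) -> (forall x, continuous f x) ->
  RInt f a b = F b - F a.
Proof.
  intros HF Hf. apply is_RInt_unique, (is_RInt_derive F f a b); intros x _; auto.
Qed.

Lemma ln_sqrt x : 0 < x -> ln (sqrt x) = ln x / 2.
Proof.
  intros Hx. rewrite <- (sqrt_sqrt x) at 2 by lra.
  rewrite ln_mult by (apply sqrt_lt_R0; lra). field.
Qed.

Definition moving_frame (x y a b : R -> R) : Prop :=
  forall t, is_derive x t (a t * cos t - b t * sin t) /\
            is_derive y t (a t * sin t + b t * cos t).

Lemma moving_frame_Derive x y a b : moving_frame x y a b ->
  Derive x = (fun t => a t * cos t - b t * sin t) /\
  Derive y = (fun t => a t * sin t + b t * cos t).
Proof.
  intros H; split; apply functional_extensionality; intro t; apply is_derive_unique, H.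
Qed.

Lemma moving_frame_speed x y a b t : moving_frame x y a b ->
  speed x y t = sqrt (a t ^ 2 + b t ^ 2).
Proof.
  intros H; unfold speed; destruct (moving_frame_Derive x y a b H) as [-> ->].
  pose proof (sin2_cos2 t) as E; unfold Rsqr in E.
  f_equal; simpl; nsatz.
Qed.

Lemma moving_frame_derive x y a b da db :
  moving_frame x y a b ->
  (forall t, is_derive a t (da t)) -> (forall t, is_derive b t (db t)) ->
  moving_frame (Derive x) (Derive y) (fun t => da t - b t) (fun t => a t + db t).
Proof.
  intros H Ha Hb t.
  destruct (moving_frame_Derive x y a b H) as [-> ->]; split; auto_derive;
    try (split; [eexists; apply Ha | split; [eexists; apply Hb | exact I]]);
    rewrite (Derive_ext (fun s => a s) a), (Derive_ext (fun s => b s) b) by reflexivity;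
    rewrite (is_derive_unique a t (da t) (Ha t)), (is_derive_unique b t (db t) (Hb t)); ring.
Qed.

Lemma moving_frame_curv_num x y a b da db t :
  moving_frame x y a b ->
  (forall t, is_derive a t (da t)) -> (forall t, is_derive b t (db t)) ->
  curv_num x y t = a t * (a t + db t) - b t * (da t - b t).
Proof.
  intros H Ha Hb; unfold curv_num.
  destruct (moving_frame_Derive _ _ _ _ (moving_frame_derive x y a b da db H Ha Hb)) as [-> ->].
  destruct (moving_frame_Derive x y a b H) as [-> ->].
  pose proof (sin2_cos2 t) as E; unfold Rsqr in E.
  nsatz.
Qed.

Section LcgProfile.

Variable e : R.
Hypothesis e_pos : 0 < e.

Definition sq_speed (q : R) : R := q ^ 2 + e ^ 2.
Definition rho_q (q : R) : R := sqrt (sq_speed q) ^ 3 / (sq_speed q + 2 * e).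
Definition rho_q' (q : R) : R :=
  q * sqrt (sq_speed q) * (sq_speed q + 6 * e) / (sq_speed q + 2 * e) ^ 2.
Definition lcgX_q (q : R) : R := 3 / 2 * ln (sq_speed q) - ln (sq_speed q + 2 * e).
Definition lcgY_q (q : R) : R :=
  3 / 2 * ln (sq_speed q) + ln (sq_speed q + 2 * e) - ln (2 * q) - ln (sq_speed q + 6 * e).
Definition lcgX_q' (q : R) : R := q * (sq_speed q + 6 * e) / (sq_speed q * (sq_speed q + 2 * e)).
Definition lcg_deviation (q : R) : R := lcgY_q q - 2 * lcgX_q q.
Definition deviation_ratio (q : R) : R :=
  - (e ^ 2 * (q ^ 4 + 2 * (e ^ 2 + 4 * e + 24) * q ^ 2 + e ^ 2 * (e + 2) * (e + 6))
     / (q ^ 2 * (sq_speed q + 6 * e) ^ 2)).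

Lemma sq_speed_pos q : 0 < sq_speed q.
Proof. unfold sq_speed. nra. Qed.

Lemma is_derive_rho_q q : is_derive rho_q q (rho_q' q).
Proof.
  pose proof (sq_speed_pos q) as Hw. unfold rho_q, rho_q'. unfold sq_speed in *.
  auto_derive; [repeat split; lra|].
  replace (q * (q * 1) + e * (e * 1)) with (q ^ 2 + e ^ 2) by ring.
  assert (HS := sqrt_sqrt _ (Rlt_le _ _ Hw)). assert (HS0 := sqrt_lt_R0 _ Hw).
  set (S := sqrt (q ^ 2 + e ^ 2)) in *. clearbody S.
  rewrite <- HS. field. split; nra.
Qed.

Lemma rho_q'_pos q : 0 < q -> 0 < rho_q' q.
Proof.
  intros Hq. pose proof (sq_speed_pos q) as Hw. pose proof (sqrt_lt_R0 _ Hw). unfold rho_q'.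
  apply Rdiv_lt_0_compat; [repeat apply Rmult_lt_0_compat | apply pow_lt]; lra.
Qed.

Lemma ln_rho_q q : ln (rho_q q) = lcgX_q q.
Proof.
  pose proof (sq_speed_pos q) as Hw. unfold rho_q, lcgX_q.
  assert (HS := sqrt_lt_R0 _ Hw).
  rewrite ln_div, ln_pow, ln_sqrt; try lra; [simpl; field | apply pow_lt, HS].
Qed.

(* [2 * rho_q' q] is dρ/dt when q = 2 t + const, whence the [ln (2 * q)] in [lcgY_q]. *)
Lemma ln_rho_q_ds_drho q : 0 < q ->
  ln (rho_q q * Rabs (sqrt (sq_speed q) / (2 * rho_q' q))) = lcgY_q q.
Proof.
  intros Hq. pose proof (sq_speed_pos q) as Hw. unfold rho_q, rho_q', lcgY_q.
  assert (HS := sqrt_sqrt _ (Rlt_le _ _ Hw)). assert (HS0 := sqrt_lt_R0 _ Hw).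
  assert (HlnS := ln_sqrt _ Hw).
  set (S := sqrt (sq_speed q)) in *. set (w := sq_speed q) in *. clearbody S w.
  assert (Hd : 0 < q * S * (w + 6 * e) / (w + 2 * e) ^ 2)
    by (apply Rdiv_lt_0_compat; [repeat apply Rmult_lt_0_compat | apply pow_lt]; lra).
  rewrite Rabs_pos_eq by (apply Rlt_le, Rdiv_lt_0_compat; lra).
  replace (S ^ 3 / (w + 2 * e) * (S / (2 * (q * S * (w + 6 * e) / (w + 2 * e) ^ 2))))
    with (S * S * S * (w + 2 * e) / (2 * q * (w + 6 * e))) by (field; lra).
  rewrite ln_div, !ln_mult; try lra; repeat apply Rmult_lt_0_compat; lra.
Qed.

Lemma is_derive_lcgX_q q : is_derive lcgX_q q (lcgX_q' q).
Proof.
  pose proof (sq_speed_pos q) as Hw. unfold lcgX_q, lcgX_q'. unfold sq_speed in *.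
  auto_derive; [repeat split; lra|]. field. lra.
Qed.

Lemma lcgX_q'_pos q : 0 < q -> 0 < lcgX_q' q.
Proof.
  intros Hq. pose proof (sq_speed_pos q). unfold lcgX_q'.
  apply Rdiv_lt_0_compat; apply Rmult_lt_0_compat; lra.
Qed.

Lemma is_derive_lcg_deviation q : 0 < q ->
  is_derive lcg_deviation q (deviation_ratio q * lcgX_q' q).
Proof.
  intros Hq. pose proof (sq_speed_pos q) as Hw.
  unfold lcg_deviation, lcgY_q, lcgX_q, deviation_ratio, lcgX_q'. unfold sq_speed in *.
  auto_derive; [repeat split; nra|]. field. repeat split; nra.
Qed.

Lemma deviation_ratio_neg q : 0 < q -> deviation_ratio q < 0.
Proof.
  intros Hq. pose proof (sq_speed_pos q). unfold deviation_ratio.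
  apply Ropp_lt_gt_0_contravar, Rdiv_lt_0_compat; apply Rmult_lt_0_compat; nra.
Qed.

Lemma deviation_ratio_bound :
  exists C, forall q, 1 <= q -> Rabs (deviation_ratio q) <= C / q ^ 2.
Proof.
  set (A := e ^ 2 + 4 * e + 24). set (B := e ^ 2 * (e + 2) * (e + 6)).
  exists (e ^ 2 * (1 + 2 * A + B)); intros q Hq.
  assert (HA : 0 < A) by (unfold A; nra). assert (HB : 0 < B) by (unfold B; nra).
  unfold deviation_ratio, sq_speed; fold A B.
  set (W := q ^ 2 + e ^ 2 + 6 * e).
  assert (HW : q ^ 2 <= W) by (unfold W; nra).
  clearbody A B W.
  assert (HN : 0 < q ^ 4 + 2 * A * q ^ 2 + B) by nra.
  assert (HD : 0 < q ^ 2 * W ^ 2)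
    by (apply Rmult_lt_0_compat; apply pow_lt; nra).
  assert (He2 : 0 < e ^ 2) by (apply pow_lt, e_pos).
  rewrite Rabs_Ropp, Rabs_pos_eq
    by (apply Rlt_le, Rdiv_lt_0_compat; [apply Rmult_lt_0_compat|]; assumption).
  apply Rle_div_l; [exact HD|].
  replace (e ^ 2 * (1 + 2 * A + B) / q ^ 2 * (q ^ 2 * W ^ 2))
    with (e ^ 2 * (1 + 2 * A + B) * W ^ 2) by (field; nra).
  assert (Hy : 1 <= q ^ 2) by (rewrite <- (pow1 2); apply pow_incr; lra).
  replace (q ^ 4) with (q ^ 2 * q ^ 2) by ring. replace (W ^ 2) with (W * W) by ring.
  rewrite (Rmult_assoc (e ^ 2)). apply Rmult_le_compat_l; [lra|].
  set (y := q ^ 2) in *. clearbody y.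
  assert (y * y <= W * W) by (apply Rmult_le_compat; lra).
  assert (y <= W * W) by nra. assert (1 <= W * W) by nra.
  assert (A * y <= A * (W * W)) by (apply Rmult_le_compat_l; lra).
  assert (B <= B * (W * W)) by nra.
  nra.
Qed.

Lemma is_lim_deviation_ratio : is_lim deviation_ratio p_infty 0.
Proof.
  destruct deviation_ratio_bound as [C HC].
  apply is_lim_spec; intros eps.
  exists (Rmax 1 (C / eps)); intros q Hq.
  assert (H1 : 1 <= q) by (pose proof (Rmax_l 1 (C / eps)); lra).
  assert (H2 : C / eps < q) by (pose proof (Rmax_r 1 (C / eps)); lra).
  apply Rlt_div_l in H2; [|apply cond_pos].
  rewrite Rminus_0_r. eapply Rle_lt_trans; [apply HC, H1|].
  apply Rlt_div_l; [apply pow_lt; lra|].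
  pose proof (cond_pos eps). assert (0 <= eps * q) by nra.
  replace (q ^ 2) with (q * q) by ring. nra.
Qed.

Lemma lcg_profile_increments a b : 0 < a < b ->
  0 < lcgX_q b - lcgX_q a /\
  exists c, a < c < b /\
    lcg_deviation b - lcg_deviation a = deviation_ratio c * (lcgX_q b - lcgX_q a).
Proof.
  intros Hab. split.
  - destruct (cauchy_mvt lcgX_q id lcgX_q' (fun _ => 1) a b) as (c & Hc & E); [lra | | |].
    + intros x _; apply is_derive_lcgX_q.
    + intros x _; apply (is_derive_id x).
    + unfold id in E. pose proof (lcgX_q'_pos c ltac:(lra)). nra.
  - destruct (cauchy_mvt lcg_deviation lcgX_q (fun q => deviation_ratio q * lcgX_q' q) lcgX_q' a b)
      as (c & Hc & E); [lra | | |].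
    + intros x Hx; apply is_derive_lcg_deviation; lra.
    + intros x _; apply is_derive_lcgX_q.
    + exists c; split; [exact Hc|].
      pose proof (lcgX_q'_pos c ltac:(lra)).
      apply (Rmult_eq_reg_r (lcgX_q' c)); [rewrite <- E; ring | lra].
Qed.

End LcgProfile.

Lemma Px_closed t : Px t = cos t + (t + 1) * sin t - 1.
Proof.
  unfold Px. rewrite (RInt_antiderivative (fun x => cos x + (x + 1) * sin x)).
  - rewrite cos_0, sin_0. ring.
  - intros x. auto_derive; [exact I | ring].
  - intros x. apply (ex_derive_continuous (V := R_NormedModule)). auto_derive. exact I.
Qed.

Lemma Py_closed t : Py t = sin t - (t + 1) * cos t + 1.
Proof.
  unfold Py. rewrite (RInt_antiderivative (fun x => sin x - (x + 1) * cos x)).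
  - rewrite cos_0, sin_0. ring.
  - intros x. auto_derive; [exact I | ring].
  - intros x. apply (ex_derive_continuous (V := R_NormedModule)). auto_derive. exact I.
Qed.

Lemma Px_sin_sub_Py_cos a b :
  Px a * sin b - Py a * cos b = sin (b - a) + (a + 1) * cos (b - a) - sin b - cos b.
Proof. rewrite Px_closed, Py_closed, sin_minus, cos_minus. ring. Qed.

Definition isoptic_e : R := 2 - delta / sqrt 3.
Definition isoptic_q (t : R) : R := 2 * (t + 1) + delta.

Lemma sqrt3_sq : sqrt 3 * sqrt 3 = 3.
Proof. apply sqrt_sqrt. lra. Qed.

Lemma sqrt3_pos : 0 < sqrt 3.
Proof. apply sqrt_lt_R0. lra. Qed.

Lemma sqrt3_mul_isoptic_e : sqrt 3 * (2 - isoptic_e) = delta.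
Proof. unfold isoptic_e. pose proof sqrt3_pos. field. lra. Qed.

(* Reduces modulo √3 √3 = 3 and √3 (2 - e) = δ: [nsatz] needs these constants abstracted,
   [pow] unfolded, and no inequality in the context. *)
Ltac nsatz_isoptic :=
  pose proof sqrt3_sq; pose proof sqrt3_mul_isoptic_e;
  generalize dependent (sqrt 3); generalize delta isoptic_e; intros; simpl; nsatz.

Lemma delta_pos : 0 < delta.
Proof. unfold delta. pose proof PI_RGT_0. lra. Qed.

Lemma isoptic_e_pos : 0 < isoptic_e.
Proof.
  pose proof sqrt3_sq; pose proof sqrt3_pos; pose proof PI_4.
  assert (3 / 2 < sqrt 3) by nra.
  unfold isoptic_e, delta. cut (2 * PI / 3 / sqrt 3 < 2); [lra|]. apply Rlt_div_l; lra.
Qed.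

Lemma sin_delta : sin delta = sqrt 3 / 2.
Proof. unfold delta. rewrite <- sin_2PI3. f_equal. field. Qed.

Lemma cos_delta : cos delta = - 1 / 2.
Proof. unfold delta. rewrite <- cos_2PI3. f_equal. field. Qed.

Lemma isoptic_q_pos t : -1 <= t -> 0 < isoptic_q t.
Proof. pose proof delta_pos. unfold isoptic_q. lra. Qed.

Lemma tI_closed t : tI t = sqrt 3 * (t + 1) + 3 - 2 * isoptic_e.
Proof.
  unfold tI, Vx, Vy.
  replace ((Px (t + delta) - Px t) * sin (t + delta) - (Py (t + delta) - Py t) * cos (t + delta))
    with ((Px (t + delta) * sin (t + delta) - Py (t + delta) * cos (t + delta))
          - (Px t * sin (t + delta) - Py t * cos (t + delta))) by ring.
  rewrite !Px_sin_sub_Py_cos, Rminus_diag, Rplus_minus_l, sin_0, cos_0.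
  rewrite sin_delta, cos_delta.
  field_simplify_eq; [nsatz_isoptic | pose proof sqrt3_pos; lra].
Qed.

Lemma isoptic_velocity_sq t :
  (t + 1 + sqrt 3) ^ 2 + tI t ^ 2 = sq_speed isoptic_e (isoptic_q t).
Proof.
  rewrite tI_closed. unfold sq_speed, isoptic_q.
  nsatz_isoptic.
Qed.

Lemma isoptic_velocity_cross t :
  (t + 1 + sqrt 3) * (t + 1 + sqrt 3 + sqrt 3) - tI t * (1 - tI t)
  = sq_speed isoptic_e (isoptic_q t) + 2 * isoptic_e.
Proof.
  rewrite tI_closed. unfold sq_speed, isoptic_q.
  nsatz_isoptic.
Qed.

Lemma is_derive_tI t : is_derive tI t (sqrt 3).
Proof.
  apply (is_derive_ext (fun t => sqrt 3 * (t + 1) + 3 - 2 * isoptic_e));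
    [intros; symmetry; apply tI_closed|].
  auto_derive; [exact I | ring].
Qed.

Lemma isoptic_moving_frame : moving_frame Ix Iy (fun t => t + 1 + sqrt 3) tI.
Proof.
  intros t. unfold Ix, Iy. split.
  - apply (is_derive_ext (fun t => cos t + (t + 1) * sin t - 1 + tI t * cos t));
      [intros; rewrite Px_closed; reflexivity|].
    auto_derive; [eexists; apply is_derive_tI|].
    erewrite is_derive_unique by apply is_derive_tI. ring.
  - apply (is_derive_ext (fun t => sin t - (t + 1) * cos t + 1 + tI t * sin t));
      [intros; rewrite Py_closed; reflexivity|].
    auto_derive; [eexists; apply is_derive_tI|].
    erewrite is_derive_unique by apply is_derive_tI. ring.
Qed.

Lemma isoptic_acceleration_moving_frame :
  moving_frame (Derive Ix) (Derive Iy)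
    (fun t => 1 - tI t) (fun t => t + 1 + sqrt 3 + sqrt 3).
Proof.
  apply (moving_frame_derive _ _ _ _ (fun _ => 1) (fun _ => sqrt 3) isoptic_moving_frame).
  - intros t. auto_derive; [exact I | ring].
  - apply is_derive_tI.
Qed.

Lemma speed_isoptic t : speed Ix Iy t = sqrt (sq_speed isoptic_e (isoptic_q t)).
Proof.
  rewrite (moving_frame_speed _ _ _ _ t isoptic_moving_frame), isoptic_velocity_sq.
  reflexivity.
Qed.

Lemma curv_num_isoptic t :
  curv_num Ix Iy t = sq_speed isoptic_e (isoptic_q t) + 2 * isoptic_e.
Proof.
  rewrite (moving_frame_curv_num _ _ _ _ (fun _ => 1) (fun _ => sqrt 3) t isoptic_moving_frame).
  - apply isoptic_velocity_cross.
  - intros s. auto_derive; [exact I | ring].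
  - apply is_derive_tI.
Qed.

Lemma rho_isoptic : rho Ix Iy = fun t => rho_q isoptic_e (isoptic_q t).
Proof.
  apply functional_extensionality; intros t.
  pose proof (sq_speed_pos isoptic_e isoptic_e_pos (isoptic_q t)); pose proof isoptic_e_pos.
  unfold rho, rho_q. rewrite speed_isoptic, curv_num_isoptic, Rabs_pos_eq by lra.
  reflexivity.
Qed.

Lemma is_derive_rho_isoptic t :
  is_derive (rho Ix Iy) t (2 * rho_q' isoptic_e (isoptic_q t)).
Proof.
  rewrite rho_isoptic. apply (is_derive_comp (rho_q isoptic_e) isoptic_q).
  - apply is_derive_rho_q, isoptic_e_pos.
  - unfold isoptic_q. auto_derive; [exact I | ring].
Qed.

Lemma lcg_X_isoptic t : lcg_X Ix Iy t = lcgX_q isoptic_e (isoptic_q t).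
Proof. unfold lcg_X. rewrite rho_isoptic. apply ln_rho_q, isoptic_e_pos. Qed.

Lemma lcg_Y_isoptic t : -1 <= t -> lcg_Y Ix Iy t = lcgY_q isoptic_e (isoptic_q t).
Proof.
  intros Ht. unfold lcg_Y.
  rewrite speed_isoptic, (is_derive_unique _ _ _ (is_derive_rho_isoptic t)), rho_isoptic.
  apply ln_rho_q_ds_drho; [apply isoptic_e_pos | apply isoptic_q_pos, Ht].
Qed.

Lemma lcg_regular_isoptic t : -1 <= t -> lcg_regular Ix Iy t.
Proof.
  intros Ht.
  pose proof (isoptic_q_pos t Ht); pose proof isoptic_e_pos.
  pose proof (sq_speed_pos isoptic_e isoptic_e_pos (isoptic_q t)).
  destruct (isoptic_moving_frame t) as [Hx Hy].
  destruct (isoptic_acceleration_moving_frame t) as [Hx' Hy'].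
  repeat split; try (eexists; eassumption).
  - rewrite speed_isoptic. apply sqrt_lt_R0. lra.
  - rewrite curv_num_isoptic. lra.
  - eexists. apply is_derive_rho_isoptic.
  - rewrite (is_derive_unique _ _ _ (is_derive_rho_isoptic t)).
    pose proof (rho_q'_pos isoptic_e isoptic_e_pos (isoptic_q t)). lra.
Qed.

Definition lcg_slope (t : R) : R :=
  (lcg_Y Ix Iy (t + PI) - lcg_Y Ix Iy t) / (lcg_X Ix Iy (t + PI) - lcg_X Ix Iy t).

Lemma lcg_slope_isoptic t : -1 <= t ->
  0 < lcg_X Ix Iy (t + PI) - lcg_X Ix Iy t /\
  exists c, isoptic_q t < c /\ lcg_slope t = 2 + deviation_ratio isoptic_e c.
Proof.
  intros Ht. pose proof PI_RGT_0. pose proof (isoptic_q_pos t Ht).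
  assert (Hq : isoptic_q (t + PI) = isoptic_q t + 2 * PI) by (unfold isoptic_q; ring).
  unfold lcg_slope. rewrite !lcg_X_isoptic, !lcg_Y_isoptic, Hq by lra.
  destruct (lcg_profile_increments isoptic_e isoptic_e_pos (isoptic_q t) (isoptic_q t + 2 * PI))
    as [HX (c & Hc & HG)]; [lra|].
  split; [exact HX|]. exists c; split; [lra|].
  unfold lcg_deviation in HG. field_simplify_eq; lra.
Qed.

Lemma lcg_slope_limit : is_lim lcg_slope p_infty 2.
Proof.
  pose proof (is_lim_deviation_ratio isoptic_e isoptic_e_pos) as Hr.
  apply is_lim_spec in Hr. apply is_lim_spec. intros eps.
  destruct (Hr eps) as [M HM].
  exists (Rmax (-1) M). intros t Ht.
  pose proof (Rmax_l (-1) M); pose proof (Rmax_r (-1) M); pose proof delta_pos.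
  destruct (lcg_slope_isoptic t) as [_ (c & Hc & ->)]; [lra|].
  replace (2 + deviation_ratio isoptic_e c - 2) with (deviation_ratio isoptic_e c - 0) by ring.
  apply HM. unfold isoptic_q in Hc. lra.
Qed.

Theorem mainTheorem2 :
  (* the LCG of I_delta (theta >= -1) is not a straight line:
     no alpha, c with log(rho ds/drho) = alpha log rho + c along the curve *)
  (forall alpha c : R,
     exists t : R, -1 <= t /\ lcg_regular Ix Iy t /\
       lcg_Y Ix Iy t <> alpha * lcg_X Ix Iy t + c)
  /\
  (* the slope of the LCG between parameters theta and theta + pi tends to 2 *)
  is_lim (fun t => (lcg_Y Ix Iy (t + PI) - lcg_Y Ix Iy t) /
                   (lcg_X Ix Iy (t + PI) - lcg_X Ix Iy t))
         p_infty 2.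
Proof.
  split; [|exact lcg_slope_limit].
  intros alpha c. apply NNPP; intros Hno.
  assert (Hline : forall t, -1 <= t -> lcg_Y Ix Iy t = alpha * lcg_X Ix Iy t + c).
  { intros t Ht. apply NNPP; intros Hne. apply Hno. exists t. auto using lcg_regular_isoptic. }
  assert (Hslope : forall t, -1 <= t -> lcg_slope t = alpha).
  { intros t Ht. destruct (lcg_slope_isoptic t Ht) as [HX _].
    unfold lcg_slope. pose proof PI_RGT_0. rewrite !Hline by lra. field. lra. }
  assert (Halpha : alpha = 2).
  { assert (Hlim : is_lim (fun _ => alpha) p_infty 2).
    { apply (is_lim_ext_loc lcg_slope); [exists (-1); intros t Ht; apply Hslope; lra|].
      exact lcg_slope_limit. }
    apply is_lim_unique in Hlim. rewrite Lim_const in Hlim. now injection Hlim. }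
  destruct (lcg_slope_isoptic 0) as [_ (q & Hq & Hs)]; [lra|].
  pose proof (isoptic_q_pos 0 ltac:(lra)).
  pose proof (deviation_ratio_neg isoptic_e isoptic_e_pos q ltac:(lra)).
  rewrite Hslope in Hs by lra. lra.
Qed.
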